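(* Let $\rho_A,\rho_B,\rho_O,\rho_T>0$, $\boldsymbol\alpha\in\mathbb R^c$, $\boldsymbol v_1\in\mathbb R^d$, $\mathcal Z=\{\boldsymbol z_x\}_{x\in[c]}\in(\mathbb R^d)^c$, and $\boldsymbol z'_x=\rho_A\boldsymbol z_x+\frac{\rho_B}{d_x}\sum_{y\in[c]}w_{x,y}\boldsymbol z_y+\rho_O\sum_{y\in[c]}\alpha_y\boldsymbol z_y+\rho_T\boldsymbol v_1$; let $\boldsymbol Z,\boldsymbol Z'\in\mathbb R^{d\times c}$ have columns $\boldsymbol z_x$, $\boldsymbol z'_x$. Let $\boldsymbol M=\rho_A\boldsymbol I+\rho_B\boldsymbol D^{-1/2}\boldsymbol W\boldsymbol D^{-1/2}$ with eigenvalues $\lambda_1,\dots,\lambda_c$ in non-increasing order of absolute value and orthonormal eigen-decomposition $\boldsymbol M=[\boldsymbol f\ \boldsymbol X\ \boldsymbol Y]\,\mathrm{diag}(\lambda_1,\boldsymbol\Lambda,\boldsymbol\Lambda')\,[\boldsymbol f\ \boldsymbol X\ \boldsymbol Y]^\top$, where $\boldsymbol X$ holds eigenvectors for $\lambda_2,\dots,\lambda_q$ and $\boldsymbol Y$ for $\lambda_{q+1},\dots,\lambda_c$ ($2\le q<c$); let $\delta_{\boldsymbol M}=|\lambda_q/\lambda_{q+1}|$. Let $\sigma:\mathbb R^d\to\mathbb R^d$ be a great mapping w.r.t. $(\gamma_1,\gamma_2,\{\boldsymbol Z'\},\boldsymbol X)$ and w.r.t. $(\gamma_1',\gamma_2',\{\boldsymbol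 Z'\},\boldsymbol Y)$. Then, provided $\lambda_{q+1}\ne0$, $\|\boldsymbol Z\boldsymbol D^{1/2}\boldsymbol X\|\ne0$ and $\|\boldsymbol Z\boldsymbol D^{1/2}\boldsymbol Y\|\ne0$, $$\frac{\|\sigma(\boldsymbol Z')\boldsymbol D^{1/2}\boldsymbol X\|}{\|\boldsymbol Z\boldsymbol D^{1/2}\boldsymbol X\|}\ge\delta_{\boldsymbol M}\frac{\gamma_1}{\gamma_2'}\,\frac{\|\sigma(\boldsymbol Z')\boldsymbol D^{1/2}\boldsymbol Y\|}{\|\boldsymbol Z\boldsymbol D^{1/2}\boldsymbol Y\|}.$$
   Context: $\mathcal G$ is a connected undirected graph on $[c]$ with (0/1) adjacency matrix $\widetilde{\boldsymbol W}$ and stationary distribution $\boldsymbol\pi$ of its random walk (all $\pi_x>0$). $\boldsymbol W=\{w_{x,y}\}$ with $w_{x,y}=\widetilde w_{x,y}\pi_x\pi_y$, $d_x=\sum_yw_{x,y}$, $\boldsymbol D=\mathrm{diag}(d_1,\dots,d_c)$. $\|\cdot\|$ is the Frobenius norm. For $\sigma:\mathbb R^d\to\mathbb R^d$ and $\boldsymbol Z\in\mathbb R^{d\times c}$, $\sigma(\boldsymbol Z)$ means $\sigma$ applied to each column. Great mapping: for a set $\mathscr Z\subseteq\mathbb R^{d\times c}$, a matrix $\boldsymbol U\in\mathbb R^{c\times p}$ with orthonormal columns, and scalars $\gamma_1,\gamma_2>0$, a function $\sigma:\mathbb R^d\to\mathbb R^d$ is a great mapping w.r.t. $(\gamma_1,\gamma_2,\mathscr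 Z,\boldsymbol U)$ if for all $\boldsymbol Z\in\mathscr Z$, $\gamma_1\|\boldsymbol Z\boldsymbol D^{1/2}\boldsymbol U\|\le\|\sigma(\boldsymbol Z)\boldsymbol D^{1/2}\boldsymbol U\|\le\gamma_2\|\boldsymbol Z\boldsymbol D^{1/2}\boldsymbol U\|$. *)

From mathcomp Require Import all_boot all_order all_algebra.
Set Implicit Arguments.
Unset Strict Implicit.
Unset Printing Implicit Defensive.
Import Order.TTheory GRing.Theory Num.Theory.
Local Open Scope ring_scope.

Section Defs.
Variable R : rcfType.

Definition frob (m n : nat) (A : 'M[R]_(m, n)) : R :=
  Num.sqrt (\sum_(i < m) \sum_(j < n) A i j ^+ 2).

(* k-th entry (0-based, as a nat index) of a row vector; 0 if out of range *)
Definition rv_at (n : nat) (v : 'rV[R]_n) (k : nat) : R :=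
  match @insub nat (fun i => i < n)%N 'I_n k with
  | Some i => v 0 i
  | None => 0
  end.

Definition adjacency01 (c : nat) (Wt : 'M[R]_c) : Prop :=
  (forall x y, Wt x y = 0 \/ Wt x y = 1) /\ (forall x y, Wt x y = Wt y x).

Definition graph_connected (c : nat) (Wt : 'M[R]_c) : Prop :=
  forall x y : 'I_c, connect (fun a b => Wt a b == 1) x y.

Definition gdeg (c : nat) (Wt : 'M[R]_c) (x : 'I_c) : R := \sum_(y < c) Wt x y.
Definition rw_trans (c : nat) (Wt : 'M[R]_c) : 'M[R]_c :=
  \matrix_(x, y) (Wt x y / gdeg Wt x).

Definition stationary_pos (c : nat) (Wt : 'M[R]_c) (pi : 'I_c -> R) : Prop :=
  (forall x, 0 < pi x) /\ (\sum_(x < c) pi x = 1) /\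
  (forall y, \sum_(x < c) pi x * rw_trans Wt x y = pi y).

Definition Wmat (c : nat) (Wt : 'M[R]_c) (pi : 'I_c -> R) : 'M[R]_c :=
  \matrix_(x, y) (Wt x y * pi x * pi y).
Definition dvec (c : nat) (Wt : 'M[R]_c) (pi : 'I_c -> R) (x : 'I_c) : R :=
  \sum_(y < c) Wmat Wt pi x y.
Definition Dsqrt (c : nat) (Wt : 'M[R]_c) (pi : 'I_c -> R) : 'M[R]_c :=
  diag_mx (\row_x Num.sqrt (dvec Wt pi x)).
Definition Dinvsqrt (c : nat) (Wt : 'M[R]_c) (pi : 'I_c -> R) : 'M[R]_c :=
  diag_mx (\row_x (Num.sqrt (dvec Wt pi x))^-1).

Definition sigma_cols (d c : nat) (sigma : 'cV[R]_d -> 'cV[R]_d)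
  (Z : 'M[R]_(d, c)) : 'M[R]_(d, c) :=
  \matrix_(i, x) (sigma (col x Z)) i 0.

Definition great_mapping (d c p : nat) (Dh : 'M[R]_c) (g1 g2 : R)
  (Zs : 'M[R]_(d, c) -> Prop) (U : 'M[R]_(c, p))
  (sigma : 'cV[R]_d -> 'cV[R]_d) : Prop :=
  0 < g1 /\ 0 < g2 /\ U^T *m U = 1%:M /\
  forall Z, Zs Z ->
    g1 * frob (Z *m Dh *m U) <= frob (sigma_cols sigma Z *m Dh *m U) /\
    frob (sigma_cols sigma Z *m Dh *m U) <= g2 * frob (Z *m Dh *m U).

Definition Zprime (d c : nat) (Wt : 'M[R]_c) (pi : 'I_c -> R)
  (rA rB rO rT : R) (alpha : 'cV[R]_c) (v1 : 'cV[R]_d) (Z : 'M[R]_(d, c))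
  : 'M[R]_(d, c) :=
  \matrix_(i, x) (rA * Z i x
                  + rB / dvec Wt pi x * \sum_(y < c) Wmat Wt pi x y * Z i y
                  + rO * \sum_(y < c) alpha y 0 * Z i y
                  + rT * v1 i 0).

Definition Mmat (c : nat) (Wt : 'M[R]_c) (pi : 'I_c -> R) (rA rB : R) : 'M[R]_c :=
  rA *: 1%:M + rB *: (Dinvsqrt Wt pi *m Wmat Wt pi *m Dinvsqrt Wt pi).

End Defs.

(* Right multiplication by D^{1/2} turns the aggregation Z |-> Z' into
   Z D^{1/2} |-> Z D^{1/2} M + u (D^{1/2} 1)^T for some column u.  The vector
   D^{1/2} 1 is an eigenvector of M for rA + rB; every eigenvalue lam of M
   satisfies |lam - rA| <= rB, and by the maximum principle on the connected
   graph the eigenspace of rA + rB is the line through D^{1/2} 1.  Hence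
   D^{1/2} 1 is orthogonal to X and Y: for eigenvalues other than rA + rB by
   symmetry of M, and for rA + rB because sortedness then forces
   lam_1 = rA + rB, making f a nonzero multiple of D^{1/2} 1.  Therefore
   Z' D^{1/2} X = Z D^{1/2} X Lam and
   Z' D^{1/2} Y = Z D^{1/2} Y Lam'.  Sortedness bounds the Frobenius norms of
   these below by |lam_q| and above by |lam_{q+1}| times those of Z D^{1/2} X
   and Z D^{1/2} Y, and the two great-mapping inequalities finish the proof. *)

From mathcomp Require Import all_boot all_order all_algebra.
From mathcomp Require Import ring lra zify.
Import Order.TTheory GRing.Theory Num.Theory.
Local Open Scope ring_scope.
Set Implicit Arguments.
Unset Strict Implicit.

Lemma eq_add_of_dist_le (R : realFieldType) (a b x : R) :
  0 < a -> `|x - a| <= b -> a + b <= `|x| -> x = a + b.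
Proof.
rewrite ler_norml ler_normr => a_gt0 /andP[lo hi] le_ab.
by apply/eqP; rewrite eq_le; apply/andP; split; [lra | case/orP: le_ab => ?; lra].
Qed.

Lemma ler_ratio_of_bounds (R : realFieldType) (g1 g2 a b A B A' B' : R) :
  0 <= g1 -> 0 < g2 -> 0 <= a -> 0 < b -> 0 < B -> 0 < B' ->
  g1 * a * B <= A -> A' <= g2 * b * B' -> a / b * (g1 / g2) * (A' / B') <= A / B.
Proof.
move=> g1_ge0 g2_gt0 a_ge0 b_gt0 B_gt0 B'_gt0 lowA upA'.
have upA'B' : A' / B' <= g2 * b by rewrite ler_pdivrMr.
apply: le_trans (ler_wpM2l _ upA'B') _; first by rewrite mulr_ge0 ?divr_ge0 // ltW.
have -> : a / b * (g1 / g2) * (g2 * b) = g1 * a.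
  by field; rewrite !lt0r_neq0.
by rewrite ler_pdivlMr.
Qed.

Section MatrixFacts.
Variable R : rcfType.

Lemma frob_ge0 m n (A : 'M[R]_(m, n)) : 0 <= frob A.
Proof. exact: sqrtr_ge0. Qed.

Lemma frobZ m n a (A : 'M[R]_(m, n)) : frob (a *: A) = `|a| * frob A.
Proof.
rewrite /frob -sqrtr_sqr -sqrtrM ?sqr_ge0 // mulr_sumr; congr Num.sqrt.
apply: eq_bigr => i _; rewrite mulr_sumr; apply: eq_bigr => j _.
by rewrite mxE exprMn.
Qed.

Lemma frob_mul_diag_mono m n (A : 'M[R]_(m, n)) (a b : 'rV[R]_n) :
  (forall j, `|a 0 j| <= `|b 0 j|) -> frob (A *m diag_mx a) <= frob (A *m diag_mx b).
Proof.
move=> le_ab; rewrite /frob ler_sqrt; last first.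
  by apply: sumr_ge0 => i _; apply: sumr_ge0 => j _; apply: sqr_ge0.
apply: ler_sum => i _; apply: ler_sum => j _.
rewrite !mul_mx_diag !mxE !exprMn ler_wpM2l ?sqr_ge0 //.
rewrite -[a 0 j ^+ 2]real_normK ?num_real // -[b 0 j ^+ 2]real_normK ?num_real //.
by rewrite lerXn2r ?nnegrE.
Qed.

Lemma frob_mul_diag_const m n (A : 'M[R]_(m, n)) (t : R) :
  frob (A *m diag_mx (const_mx t)) = `|t| * frob A.
Proof. by rewrite diag_const_mx mul_mx_scalar frobZ. Qed.

Lemma frob_mul_diag_lb m n (A : 'M[R]_(m, n)) (a : 'rV[R]_n) (t : R) :
  (forall j, `|t| <= `|a 0 j|) -> `|t| * frob A <= frob (A *m diag_mx a).
Proof.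
move=> le_ta; rewrite -frob_mul_diag_const; apply: frob_mul_diag_mono => j.
by rewrite mxE.
Qed.

Lemma frob_mul_diag_ub m n (A : 'M[R]_(m, n)) (a : 'rV[R]_n) (t : R) :
  (forall j, `|a 0 j| <= `|t|) -> frob (A *m diag_mx a) <= `|t| * frob A.
Proof.
move=> le_at; rewrite -frob_mul_diag_const; apply: frob_mul_diag_mono => j.
by rewrite mxE.
Qed.

Lemma orthonormal_row_mx m n1 n2 (A : 'M[R]_(m, n1)) (B : 'M[R]_(m, n2)) :
  (row_mx A B)^T *m row_mx A B = 1%:M ->
  [/\ A^T *m A = 1%:M, A^T *m B = 0 & B^T *m B = 1%:M].
Proof. by rewrite tr_row_mx mul_col_row scalar_mx_block => /eq_block_mx[-> -> _ ->]. Qed.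

Lemma orthonormal_eigen_mul n m (M : 'M[R]_n) (P : 'M[R]_(n, m)) (L : 'rV[R]_m) :
  P^T *m P = 1%:M -> M = P *m diag_mx L *m P^T -> M *m P = P *m diag_mx L.
Proof. by move=> orthP ->; rewrite -mulmxA orthP mulmx1. Qed.

Lemma eigen_row_mx n m1 m2 (M : 'M[R]_n) (A : 'M[R]_(n, m1)) (B : 'M[R]_(n, m2))
    (a : 'rV[R]_m1) (b : 'rV[R]_m2) :
  M *m row_mx A B = row_mx A B *m diag_mx (row_mx a b) ->
  M *m A = A *m diag_mx a /\ M *m B = B *m diag_mx b.
Proof. by rewrite mul_mx_row diag_mx_row mul_row_block !mulmx0 addr0 add0r => /eq_row_mx. Qed.

Lemma mul_mx_diag_scalar n (v : 'cV[R]_n) (a : R) : v *m diag_mx a%:M = a *: v.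
Proof.
rewrite -mul_mx_scalar; congr (_ *m _).
by apply/matrixP => i j; rewrite !ord1 !mxE.
Qed.

Lemma col_mul_diag n m (A : 'M[R]_(n, m)) (a : 'rV[R]_m) j :
  col j (A *m diag_mx a) = a 0 j *: col j A.
Proof. by apply/matrixP => i k; rewrite mul_mx_diag !mxE mulrC. Qed.

Lemma rv_at_ord n (v : 'rV[R]_n) (i : 'I_n) : rv_at v i = v 0 i.
Proof.
rewrite /rv_at; case: insubP => [j _ ij|]; last by rewrite ltn_ord.
by congr (v 0 _); apply: val_inj.
Qed.

Lemma rv_at_row_mxl n1 n2 (a : 'rV[R]_n1) (b : 'rV[R]_n2) (i : 'I_n1) :
  rv_at (row_mx a b) i = a 0 i.
Proof. by rewrite (rv_at_ord _ (lshift n2 i)) row_mxEl. Qed.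

Lemma rv_at_row_mxr n1 n2 (a : 'rV[R]_n1) (b : 'rV[R]_n2) k :
  rv_at (row_mx a b) (n1 + k) = rv_at b k.
Proof.
case: (ltnP k n2) => [lt_k_n2|le_n2_k].
  by rewrite (rv_at_ord _ (rshift n1 (Ordinal lt_k_n2))) row_mxEr (rv_at_ord _ (Ordinal lt_k_n2)).
by rewrite /rv_at !insubN // -leqNgt ?leq_add2l.
Qed.

Lemma unit_col_neq0 n (v : 'cV[R]_n) : v^T *m v = 1%:M -> v != 0.
Proof.
move=> vv; apply/eqP => v0; move: vv; rewrite v0 trmx0 mul0mx => /matrixP/(_ 0 0)/eqP.
by rewrite !mxE eq_sym oner_eq0.
Qed.

Lemma orthonormal_eigen_blocks n m1 m2 (M : 'M[R]_n) (f : 'cV[R]_n)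
    (X : 'M[R]_(n, m1)) (Y : 'M[R]_(n, m2)) (l : R) (a : 'rV[R]_m1) (b : 'rV[R]_m2) :
  (row_mx f (row_mx X Y))^T *m row_mx f (row_mx X Y) = 1%:M ->
  M = row_mx f (row_mx X Y) *m diag_mx (row_mx l%:M (row_mx a b)) *m (row_mx f (row_mx X Y))^T ->
  [/\ M *m f = l *: f, M *m X = X *m diag_mx a, M *m Y = Y *m diag_mx b, f != 0
    & f^T *m X = 0 /\ f^T *m Y = 0].
Proof.
move=> orthP decM; have [ff fXY _] := orthonormal_row_mx orthP.
have [Mf /eigen_row_mx[MX MY]] := eigen_row_mx (orthonormal_eigen_mul orthP decM).
split=> //; first by rewrite Mf mul_mx_diag_scalar.
  exact: unit_col_neq0.
by apply/eq_row_mx; rewrite -mul_mx_row fXY row_mx0.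
Qed.

Lemma sorted_norm_blocks n1 n2 N (l : R) (a : 'rV[R]_n1) (b : 'rV[R]_n2) :
  let L := row_mx l%:M (row_mx a b) in
  (1 + (n1 + n2) <= N)%N ->
  (forall i j : nat, (i <= j)%N -> (j < N)%N -> `|rv_at L j| <= `|rv_at L i|) ->
  [/\ forall j, `|a 0 j| <= `|l|, forall j, `|b 0 j| <= `|l|,
      forall j, `|rv_at L n1| <= `|a 0 j| & forall j, `|b 0 j| <= `|rv_at L n1.+1|].
Proof.
move=> L le_N sorted.
have L_l : rv_at L 0 = l by rewrite (rv_at_row_mxl _ _ (0 : 'I_1)) mxE.
have L_a (j : 'I_n1) : rv_at L (1 + j) = a 0 j by rewrite rv_at_row_mxr rv_at_row_mxl.
have L_b (j : 'I_n2) : rv_at L (1 + (n1 + j)) = b 0 j by rewrite !rv_at_row_mxr rv_at_ord.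
by split=> j; rewrite -?L_l -?L_a -?L_b; apply: sorted; have := ltn_ord j; lia.
Qed.

End MatrixFacts.

Section NormalizedAdjacency.
Variables (R : rcfType) (c : nat) (Wt : 'M[R]_c) (pi : 'I_c -> R) (rA rB : R).
Hypotheses (hadj : adjacency01 Wt) (hconn : graph_connected Wt).
Hypotheses (pi_gt0 : forall x, 0 < pi x) (c_gt1 : (1 < c)%N).
Hypotheses (rA_gt0 : 0 < rA) (rB_gt0 : 0 < rB).

Local Notation W := (Wmat Wt pi).
Local Notation deg := (dvec Wt pi).
Local Notation M := (Mmat Wt pi rA rB).

Definition sqrt_deg : 'cV[R]_c := \col_x Num.sqrt (deg x).

Lemma Wmat_ge0 x y : 0 <= W x y.
Proof.
rewrite mxE; have [/(_ x y) [] -> _] := hadj; rewrite ?mul0r // mul1r.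
by rewrite mulr_ge0 // ltW.
Qed.

Lemma Wmat_sym x y : W x y = W y x.
Proof. by rewrite !mxE; have [_ ->] := hadj; rewrite mulrAC. Qed.

Lemma exists_neighbour x : exists z, Wt x z = 1.
Proof.
have [y neq_yx] : exists y : 'I_c, y != x.
  pose y0 : 'I_c := Ordinal (ltnW c_gt1); pose y1 : 'I_c := Ordinal c_gt1.
  by exists (if x == y0 then y1 else y0); case: (x =P y0) => [->|/eqP]; rewrite // eq_sym.
have /connectP[[|z p] /= path_xp last_xp] := hconn x y.
  by rewrite last_xp eqxx in neq_yx.
by exists z; case/andP: path_xp => /eqP.
Qed.

Lemma deg_gt0 x : 0 < deg x.
Proof.
have [z Wxz] := exists_neighbour x.
rewrite /dvec (bigD1 z) //= ltr_wpDr ?sumr_ge0 // => [y _|]; first exact: Wmat_ge0.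
by rewrite mxE Wxz mul1r mulr_gt0.
Qed.

Lemma sqrt_deg_neq0 x : Num.sqrt (deg x) != 0.
Proof. by rewrite gt_eqF // sqrtr_gt0 deg_gt0. Qed.

Lemma sqr_sqrt_deg x : Num.sqrt (deg x) ^+ 2 = deg x.
Proof. by rewrite sqr_sqrtr // ltW // deg_gt0. Qed.

Lemma Mmat_mulE (v : 'cV[R]_c) x :
  (M *m v) x 0 = rA * v x 0
    + rB / Num.sqrt (deg x) * \sum_y W x y * (v y 0 / Num.sqrt (deg y)).
Proof.
rewrite /Mmat mulmxDl -!scalemxAl mul1mx -!mulmxA /Dinvsqrt !mul_diag_mx !mxE.
rewrite -mulrA; congr (_ + _ * (_ * _)); apply: eq_bigr => y _.
by congr (_ * _); rewrite !mxE mulrC.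
Qed.

Lemma Mmat_sym : M^T = M.
Proof.
have WT : W^T = W by apply/matrixP => x y; rewrite mxE Wmat_sym.
by rewrite /Mmat linearD !linearZ /= trmx1 !trmx_mul !tr_diag_mx WT mulmxA.
Qed.

Lemma Mmat_sqrt_deg : M *m sqrt_deg = (rA + rB) *: sqrt_deg.
Proof.
apply/matrixP => x j; rewrite ord1 Mmat_mulE [RHS]mxE mxE.
under eq_bigr do rewrite [sqrt_deg _ _]mxE divff ?sqrt_deg_neq0 // mulr1.
set s := Num.sqrt (deg x); rewrite -[\sum_y W x y]/(deg x) -(sqr_sqrt_deg x) -/s.
by field; apply: sqrt_deg_neq0.
Qed.

Lemma eigen_harmonic (v : 'cV[R]_c) (lam : R) : M *m v = lam *: v -> forall x,
  rB * \sum_y W x y * (v y 0 / Num.sqrt (deg y))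
    = (lam - rA) * deg x * (v x 0 / Num.sqrt (deg x)).
Proof.
move=> Mv x; have := congr1 (fun A : 'cV_c => A x 0) Mv; rewrite /= Mmat_mulE mxE.
have := sqrt_deg_neq0 x; have := sqr_sqrt_deg x.
set s := Num.sqrt (deg x); set S := \sum_y _ => <- s_neq0 E; clearbody s S.
have -> : rB * S = s * (rB / s * S) by field.
by rewrite (_ : rB / s * S = lam * v x 0 - rA * v x 0); [field | rewrite -E; ring].
Qed.

Lemma eigenvalue_bound (v : 'cV[R]_c) (lam : R) :
  M *m v = lam *: v -> v != 0 -> `|lam - rA| <= rB.
Proof.
move=> /eigen_harmonic harm nz_v.
pose h y := v y 0 / Num.sqrt (deg y).
have [i hi_neq0] : exists i, h i != 0.
  apply/existsP; apply: contraNT nz_v => /existsPn h0; apply/eqP/matrixP => y j.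
  move: (h0 y); rewrite ord1 mxE negbK mulf_eq0 invr_eq0 (negbTE (sqrt_deg_neq0 y)).
  by rewrite orbF => /eqP.
have [x _ hmax] := @arg_maxP _ _ _ i xpredT (fun y => `|h y|) isT.
have hx_gt0 : 0 < `|h x| by apply: lt_le_trans (hmax i isT); rewrite normr_gt0.
rewrite -(ler_pM2r (mulr_gt0 (deg_gt0 x) hx_gt0)).
have -> : `|lam - rA| * (deg x * `|h x|) = `|rB * \sum_y W x y * h y|.
  by rewrite harm [RHS]normrM [in RHS]normrM (ger0_norm (ltW (deg_gt0 x))) mulrA.
rewrite normrM (gtr0_norm rB_gt0) ler_wpM2l ?(ltW rB_gt0) //.
rewrite /dvec mulr_suml; apply: le_trans (ler_norm_sum _ _ _) _; apply: ler_sum => y _.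
by rewrite normrM ger0_norm ?Wmat_ge0 // ler_wpM2l ?Wmat_ge0 //; apply: hmax.
Qed.

Lemma perron_eigenspace (v : 'cV[R]_c) :
  M *m v = (rA + rB) *: v -> exists k, v = k *: sqrt_deg.
Proof.
move=> /eigen_harmonic harm.
pose h y := v y 0 / Num.sqrt (deg y).
(* h is W-harmonic, so a maximum of h spreads along every edge. *)
have mean_h a : \sum_y W a y * h y = deg a * h a.
  by apply: (mulfI (lt0r_neq0 rB_gt0)); rewrite harm addrC addKr -mulrA.
pose x0 : 'I_c := Ordinal (ltnW c_gt1).
have [x _ hmax] := @arg_maxP _ _ _ x0 xpredT h isT.
have max_spreads a b : h a = h x -> Wt a b = 1 -> h b = h x.
  move=> hax Wab.
  have gap_ge0 y : true -> 0 <= W a y * (h a - h y).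
    by move=> _; rewrite mulr_ge0 ?Wmat_ge0 // hax subr_ge0; apply: hmax.
  have gap_sum0 : \sum_y W a y * (h a - h y) = 0.
    by under eq_bigr do rewrite mulrBr; rewrite sumrB mean_h /dvec mulr_suml subrr.
  have /eqP := psumr_eq0P gap_ge0 gap_sum0 (i := b) isT.
  rewrite mulf_eq0 mxE Wab mul1r mulf_eq0 (gt_eqF (pi_gt0 a)) (gt_eqF (pi_gt0 b)) /=.
  by rewrite subr_eq0 hax eq_sym => /eqP.
have closed_max : closed (fun a b => Wt a b == 1) [pred a | h a == h x].
  move=> a b /eqP Wab /=; apply/eqP/eqP => [/max_spreads|]; first exact.
  by move/max_spreads; apply; have [_ <-] := hadj.
exists (h x); apply/matrixP => z j; rewrite ord1 !mxE.
have := closed_connect closed_max (hconn x z); rewrite !inE eqxx => /esym/eqP <-.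
by rewrite divfK ?sqrt_deg_neq0.
Qed.

Lemma sqrt_deg_orthogonal (f v : 'cV[R]_c) (lam1 lam : R) :
  M *m f = lam1 *: f -> f != 0 -> M *m v = lam *: v -> f^T *m v = 0 ->
  `|lam| <= `|lam1| -> sqrt_deg^T *m v = 0.
Proof.
move=> Mf nz_f Mv fv le_lam.
have [lamE|lam_neq] := eqVneq lam (rA + rB); last first.
  have : lam *: (sqrt_deg^T *m v) = (rA + rB) *: (sqrt_deg^T *m v).
    by rewrite scalemxAr -Mv mulmxA -Mmat_sym -trmx_mul Mmat_sqrt_deg linearZ -scalemxAl.
  by move/eqP; rewrite -subr_eq0 -scalerBl scaler_eq0 subr_eq0 (negbTE lam_neq) => /eqP.
rewrite lamE in le_lam.
have lam1E : lam1 = rA + rB.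
  apply: eq_add_of_dist_le rA_gt0 (eigenvalue_bound Mf nz_f) (le_trans _ le_lam).
  by rewrite ger0_norm // ltW // addr_gt0.
rewrite lam1E in Mf; have [k' fE] := perron_eigenspace Mf.
have k'_neq0 : k' != 0 by apply: contraNneq nz_f => k'0; rewrite fE k'0 scale0r.
move: fv; rewrite fE linearZ -scalemxAl => /eqP.
by rewrite scaler_eq0 (negbTE k'_neq0) => /eqP.
Qed.

Lemma sqrt_deg_orthogonal_mx m (f : 'cV[R]_c) (lam1 : R) (B : 'M[R]_(c, m)) (a : 'rV[R]_m) :
  M *m f = lam1 *: f -> f != 0 -> M *m B = B *m diag_mx a -> f^T *m B = 0 ->
  (forall j, `|a 0 j| <= `|lam1|) -> sqrt_deg^T *m B = 0.
Proof.
move=> Mf nz_f MB fB le_a; apply/matrixP => i j.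
have MBj : M *m col j B = a 0 j *: col j B.
  by rewrite [in LHS]colE mulmxA MB -colE col_mul_diag.
have fBj : f^T *m col j B = 0 by rewrite colE mulmxA fB mul0mx.
have := sqrt_deg_orthogonal Mf nz_f MBj fBj (le_a j).
by rewrite colE mulmxA => /matrixP/(_ i 0); rewrite -colE !mxE.
Qed.

Lemma Zprime_Dsqrt n rO rT (alpha : 'cV[R]_c) (v1 : 'cV[R]_n) (Z : 'M[R]_(n, c)) :
  Zprime Wt pi rA rB rO rT alpha v1 Z *m Dsqrt Wt pi =
  Z *m Dsqrt Wt pi *m M
  + (\col_i (rO * \sum_y alpha y 0 * Z i y + rT * v1 i 0)) *m sqrt_deg^T.
Proof.
apply/matrixP => i x; rewrite [RHS]mxE.
have -> : (Z *m Dsqrt Wt pi *m M) i x = (M *m (row i (Z *m Dsqrt Wt pi))^T) x 0.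
  by rewrite -[in RHS]Mmat_sym -trmx_mul [RHS]mxE -row_mul [RHS]mxE.
have ZD_entry y : (row i (Z *m Dsqrt Wt pi))^T y 0 / Num.sqrt (deg y) = Z i y.
  by rewrite /Dsqrt mul_mx_diag !mxE mulfK ?sqrt_deg_neq0.
rewrite Mmat_mulE; under eq_bigr do rewrite ZD_entry.
rewrite /Dsqrt !mul_mx_diag !mxE big_ord1 !mxE.
have := sqrt_deg_neq0 x; have := sqr_sqrt_deg x.
set s := Num.sqrt (deg x) => <- s_neq0; clearbody s.
by field.
Qed.

Lemma Zprime_Dsqrt_eigen n rO rT (alpha : 'cV[R]_c) (v1 : 'cV[R]_n) (Z : 'M[R]_(n, c))
    m (f : 'cV[R]_c) (lam1 : R) (B : 'M[R]_(c, m)) (a : 'rV[R]_m) :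
  M *m f = lam1 *: f -> f != 0 -> M *m B = B *m diag_mx a -> f^T *m B = 0 ->
  (forall j, `|a 0 j| <= `|lam1|) ->
  Zprime Wt pi rA rB rO rT alpha v1 Z *m Dsqrt Wt pi *m B = Z *m Dsqrt Wt pi *m B *m diag_mx a.
Proof.
move=> Mf nz_f MB fB le_a; have sB := sqrt_deg_orthogonal_mx Mf nz_f MB fB le_a.
by rewrite Zprime_Dsqrt mulmxDl -!mulmxA MB sB mulmx0 addr0.
Qed.

End NormalizedAdjacency.


Unset Implicit Arguments.

Theorem corollary4 (R : rcfType) (c d q : nat)
  (Wt : 'M[R]_c) (pi : 'I_c -> R)
  (hadj : adjacency01 Wt) (hconn : graph_connected Wt)
  (hpi : stationary_pos Wt pi)
  (rA rB rO rT : R) (hrA : 0 < rA) (hrB : 0 < rB) (hrO : 0 < rO) (hrT : 0 < rT)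
  (alpha : 'cV[R]_c) (v1 : 'cV[R]_d) (Z : 'M[R]_(d, c))
  (hq : (2 <= q)%N) (hqc : (q < c)%N)
  (f : 'cV[R]_c) (X : 'M[R]_(c, q.-1)) (Y : 'M[R]_(c, c - q))
  (lam1 : R) (Lam : 'rV[R]_(q.-1)) (Lam' : 'rV[R]_(c - q))
  (horth : (row_mx f (row_mx X Y))^T *m row_mx f (row_mx X Y) = 1%:M)
  (hdecomp : Mmat Wt pi rA rB =
     row_mx f (row_mx X Y)
     *m diag_mx (row_mx lam1%:M (row_mx Lam Lam'))
     *m (row_mx f (row_mx X Y))^T)
  (hsorted : forall i j : nat, (i <= j)%N -> (j < c)%N ->
     `|rv_at (row_mx lam1%:M (row_mx Lam Lam')) j|
       <= `|rv_at (row_mx lam1%:M (row_mx Lam Lam')) i|)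
  (sigma : 'cV[R]_d -> 'cV[R]_d) (g1 g2 g1' g2' : R)
  (hgX : great_mapping (Dsqrt Wt pi) g1 g2
           (fun Z0 => Z0 = Zprime Wt pi rA rB rO rT alpha v1 Z) X sigma)
  (hgY : great_mapping (Dsqrt Wt pi) g1' g2'
           (fun Z0 => Z0 = Zprime Wt pi rA rB rO rT alpha v1 Z) Y sigma)
  (hlam : rv_at (row_mx lam1%:M (row_mx Lam Lam')) q != 0)
  (hZX : frob (Z *m Dsqrt Wt pi *m X) != 0)
  (hZY : frob (Z *m Dsqrt Wt pi *m Y) != 0) :
  let Z' := Zprime Wt pi rA rB rO rT alpha v1 Z in
  let L := row_mx lam1%:M (row_mx Lam Lam') in
  let deltaM := `| rv_at L q.-1 / rv_at L q | in
  frob (sigma_cols sigma Z' *m Dsqrt Wt pi *m X) / frob (Z *m Dsqrt Wt pi *m X)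
  >= deltaM * (g1 / g2') *
     (frob (sigma_cols sigma Z' *m Dsqrt Wt pi *m Y) / frob (Z *m Dsqrt Wt pi *m Y)).
Proof.
cbv zeta; set Z' := Zprime _ _ _ _ _ _ _ _ _; set L := row_mx _ _.
have [pi_gt0 _] := hpi.
have c_gt1 : (1 < c)%N by lia.
have c_split : (1 + (q.-1 + (c - q)) <= c)%N by lia.
have [Lam_le Lam'_le gapX] := sorted_norm_blocks c_split hsorted.
rewrite (prednK (ltnW hq)) => gapY.
have [Mf MX MY nz_f [fX fY]] := orthonormal_eigen_blocks horth hdecomp.
have Z'_eigen := Zprime_Dsqrt_eigen hadj hconn pi_gt0 c_gt1 hrA hrB rO rT alpha v1 Z.
have Z'X := Z'_eigen _ _ _ _ _ Mf nz_f MX fX Lam_le.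
have Z'Y := Z'_eigen _ _ _ _ _ Mf nz_f MY fY Lam'_le.
have [g1_gt0 [_ [_ /(_ Z' erefl) [lowX _]]]] := hgX.
have [_ [g2'_gt0 [_ /(_ Z' erefl) [_ upY]]]] := hgY.
rewrite normrM normfV.
apply: (ler_ratio_of_bounds (ltW g1_gt0) g2'_gt0 (normr_ge0 _)).
- by rewrite normr_gt0.
- by rewrite lt_def hZX frob_ge0.
- by rewrite lt_def hZY frob_ge0.
- apply: le_trans lowX; rewrite Z'X -mulrA (ler_pM2l g1_gt0).
  exact: frob_mul_diag_lb gapX.
- apply: le_trans upY _; rewrite Z'Y -mulrA (ler_pM2l g2'_gt0).
  exact: frob_mul_diag_ub gapY.
Qed.
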